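(* For any $\tau_f\in(\tau_1^i,\tau_2^i)$ there exists a unique $\tau_{pr}=\tau_{pr}(\tau_f)\in(1,\tau_f)$ such that, with $\tau_b=\tau_{pr}(\tau_f)$, $$p'(\tau_b)<\frac{2h(\tau_b)-2h(\tau_f)}{\tau_b^2-\tau_f^2}=p'(\tau_f)$$ and Liu's extended entropy condition $\frac{2h(\tau_f)-2h(\tau_b)}{\tau_f^2-\tau_b^2}<\frac{2h(\tau_f)-2h(\tau)}{\tau_f^2-\tau^2}$ for all $\tau\in(\tau_b,\tau_f)$ hold. Moreover, $\frac{d\tau_{pr}}{d\tau_f}<0$ for $\tau_f\in(\tau_1^i,\tau_2^i)$.
   Context: The pressure is $p(\tau)=\frac{\mathcal S}{(\tau-1)^\gamma}-\frac{1}{\tau^2}$ for $\tau>1$, with constants $1<\gamma<2$, $\mathcal S>0$, assumed such that there exist $1<\tau_1^i<\tau_2^i$ with $p'<0$ on $(1,\infty)$, $p''>0$ on $(1,\tau_1^i)\cup(\tau_2^i,\infty)$, $p''<0$ on $(\tau_1^i,\tau_2^i)$. The function $h$ satisfies $h'(\tau)=\tau p'(\tau)$. *)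

From Stdlib Require Import Reals.
From Coquelicot Require Import Coquelicot.
Open Scope R_scope.

Definition pres (S gamma : R) (tau : R) : R :=
  S / Rpower (tau - 1) gamma - 1 / tau ^ 2.

Definition chord (h : R -> R) (a b : R) : R :=
  (2 * h a - 2 * h b) / (a ^ 2 - b ^ 2).

Definition tpr_prop (S gamma : R) (h : R -> R) (tf tb : R) : Prop :=
  Derive (pres S gamma) tb < chord h tb tf /\
  chord h tb tf = Derive (pres S gamma) tf /\
  (forall tau, tb < tau < tf -> chord h tf tb < chord h tf tau).

From Stdlib Require Import Reals Lra ClassicalEpsilon.
From Coquelicot Require Import Coquelicot.
Open Scope R_scope.

(* Write [P1 = p'] and [G x t = secant_gap x t = h t - h x - P1 x (t^2 - x^2) / 2], so that the
   chord condition for [(tau_b, tau_f)] is [G tau_f tau_b = 0] and Liu's condition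
   is [G tau_f < 0] on [(tau_b, tau_f)].  Since [d G x t / dt = t (P1 t - P1 x)],
   and [P1] increases on [(1, tau_1]] and decreases on [[tau_1, tau_2]], for
   [x] in [(tau_1, tau_2)] the function [G x] is negative on [[tau_1, x)], positive
   near [1] (where [p] blows up), and changes sign exactly once, at a point
   [tau_pr x < tau_1] with [P1 (tau_pr x) < P1 x].  Because [G] is continuous in [x]
   and changes sign at [tau_pr x], [tau_pr] is continuous; dividing
   [G y (tau_pr y) - G y (tau_pr x) = - G y (tau_pr x)] by [tau_pr y - tau_pr x]
   then gives
   [tau_pr' x = p'' x (tau_pr x ^ 2 - x ^ 2) / (2 tau_pr x (P1 (tau_pr x) - P1 x)) < 0]. *)

Lemma is_lim_slope (f : R -> R) (x l : R) :
  is_derive f x l -> is_lim (fun y => (f y - f x) / (y - x)) x l.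
Proof.
  intros Hf. apply is_derive_Reals in Hf. apply is_lim_spec.
  intros eps. destruct (Hf eps (cond_pos eps)) as [d Hd].
  exists d. intros y Hy Hyx. change R in y. change (Rabs (y - x) < d) in Hy.
  specialize (Hd (y - x) ltac:(lra) Hy).
  now replace (x + (y - x)) with y in Hd by ring.
Qed.

Lemma is_derive_of_is_lim_slope (f : R -> R) (x l : R) :
  is_lim (fun y => (f y - f x) / (y - x)) x l -> is_derive f x l.
Proof.
  intros Hf. apply is_derive_Reals. apply is_lim_spec in Hf.
  intros eps Heps. destruct (Hf (mkposreal eps Heps)) as [d Hd].
  exists d. intros k Hk Hkd.
  assert (Hball : ball x d (x + k)).
  { change (Rabs (x + k - x) < d). now replace (x + k - x) with k by ring. }
  specialize (Hd (x + k) Hball ltac:(lra)). simpl in Hd.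
  now replace (x + k - x) with k in Hd by ring.
Qed.

Lemma lt_of_is_derive_pos (f df : R -> R) (a b : R) : a < b ->
  (forall c, a <= c <= b -> is_derive f c (df c)) ->
  (forall c, a < c < b -> 0 < df c) -> f a < f b.
Proof.
  intros Hab Hf Hdf.
  destruct (MVT_cor2 f df a b Hab) as [c [Hmvt Hc]].
  - intros c Hc. now apply is_derive_Reals, Hf.
  - specialize (Hdf c Hc). nra.
Qed.

Lemma lt_of_is_derive_neg (f df : R -> R) (a b : R) : a < b ->
  (forall c, a <= c <= b -> is_derive f c (df c)) ->
  (forall c, a < c < b -> df c < 0) -> f b < f a.
Proof.
  intros Hab Hf Hdf.
  enough (- f a < - f b) by lra.
  apply (lt_of_is_derive_pos (fun t => - f t) (fun t => - df t)); auto.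
  - intros c Hc. apply (is_derive_opp f). now apply Hf.
  - intros c Hc. specialize (Hdf c Hc). lra.
Qed.

Lemma locally_pos_of_continuous (f : R -> R) (x : R) :
  continuous f x -> 0 < f x -> locally x (fun y => 0 < f y).
Proof.
  intros Hf Hx.
  apply (filter_imp (fun y => ball (f x) (mkposreal _ Hx) (f y))).
  - intros y Hy. change (Rabs (f y - f x) < f x) in Hy.
    apply Rabs_def2 in Hy. lra.
  - exact (proj1 (filterlim_locally f (f x)) Hf (mkposreal _ Hx)).
Qed.

Lemma locally_neg_of_continuous (f : R -> R) (x : R) :
  continuous f x -> f x < 0 -> locally x (fun y => f y < 0).
Proof.
  intros Hf Hx.
  apply (filter_imp (fun y => 0 < - f y)); [intros y; lra|].
  apply locally_pos_of_continuous; [|lra].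
  now apply (continuous_opp f).
Qed.

Definition slope_at (f : R -> R) (a l t : R) : R :=
  if Req_EM_T t a then l else (f t - f a) / (t - a).

Lemma slope_at_spec (f : R -> R) (a l t : R) :
  (t - a) * slope_at f a l t = f t - f a.
Proof.
  unfold slope_at. destruct (Req_EM_T t a) as [->|Hne].
  - ring.
  - field. lra.
Qed.

Lemma slope_at_eq (f : R -> R) (a l : R) : slope_at f a l a = l.
Proof. unfold slope_at. now destruct (Req_EM_T a a). Qed.

Lemma continuous_slope_at (f : R -> R) (a l : R) :
  is_derive f a l -> continuous (slope_at f a l) a.
Proof.
  intros Hf. apply continuity_pt_filterlim, continuity_pt_filterlim'.
  rewrite slope_at_eq.
  enough (Hlim : is_lim (slope_at f a l) a l) by exact Hlim.
  apply (is_lim_ext_loc (fun t => (f t - f a) / (t - a))); [|now apply is_lim_slope].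
  exists (mkposreal 1 Rlt_0_1). intros t _ Hta.
  unfold slope_at. now destruct (Req_EM_T t a).
Qed.

Lemma exists_pos_lt3 (a b c : R) : 0 < a -> 0 < b -> 0 < c ->
  exists e, 0 < e /\ e < a /\ e < b /\ e < c.
Proof.
  intros Ha Hb Hc. exists (Rmin a (Rmin b c) / 2).
  pose proof (Rmin_l a (Rmin b c)). pose proof (Rmin_r a (Rmin b c)).
  pose proof (Rmin_l b c). pose proof (Rmin_r b c).
  pose proof (Rmin_pos a (Rmin b c) Ha (Rmin_pos b c Hb Hc)).
  lra.
Qed.

Lemma continuous_sign_change_point (G : R -> R -> R) (b : R -> R) (lo hi x0 : R) :
  lo < b x0 < hi ->
  (forall t, lo < t < hi -> continuous (fun y => G y t) x0) ->
  locally x0 (fun y => (forall t, lo < t < b y -> 0 < G y t) /\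
                       (forall t, b y < t < hi -> G y t < 0)) ->
  continuous b x0.
Proof.
  intros Hb0 HG Hsign. apply filterlim_locally. intros eps.
  destruct (exists_pos_lt3 eps (b x0 - lo) (hi - b x0)) as (e & He & Heps & Hlo & Hhi);
    [apply cond_pos|lra|lra|].
  destruct (locally_singleton _ _ Hsign) as [Hpos0 Hneg0].
  assert (Hpos : locally x0 (fun y => 0 < G y (b x0 - e))).
  { apply locally_pos_of_continuous; [apply HG|apply Hpos0]; lra. }
  assert (Hneg : locally x0 (fun y => G y (b x0 + e) < 0)).
  { apply locally_neg_of_continuous; [apply HG|apply Hneg0]; lra. }
  generalize (filter_and _ _ Hsign (filter_and _ _ Hpos Hneg)).
  apply filter_imp. intros y [[Hleft Hright] [Hy_pos Hy_neg]].
  assert (b x0 - e <= b y).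
  { apply Rnot_lt_le. intros Hlt. specialize (Hright (b x0 - e)). lra. }
  assert (b y <= b x0 + e).
  { apply Rnot_lt_le. intros Hlt. specialize (Hleft (b x0 + e)). lra. }
  change (Rabs (b y - b x0) < eps). apply Rabs_def1; lra.
Qed.

Lemma locally_neq0_of_continuous (f : R -> R) (x : R) :
  continuous f x -> f x <> 0 -> locally x (fun y => f y <> 0).
Proof.
  intros Hf Hx. destruct (Rdichotomy _ _ Hx) as [Hneg|Hpos].
  - apply (filter_imp (fun y => f y < 0)); [intros y; lra|].
    now apply locally_neg_of_continuous.
  - apply (filter_imp (fun y => 0 < f y)); [intros y; lra|].
    now apply locally_pos_of_continuous.
Qed.

Lemma is_derive_of_factorization (b g Q : R -> R) (x0 dg : R) :
  is_derive g x0 dg -> continuous Q x0 -> Q x0 <> 0 ->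
  locally x0 (fun y => (b y - b x0) * Q y = g x0 - g y) ->
  is_derive b x0 (- dg / Q x0).
Proof.
  intros Hg HQ HQ0 Hfact. apply is_derive_of_is_lim_slope.
  assert (HQlim : is_lim Q x0 (Q x0))
    by exact (is_lim_comp_continuous (fun y => y) Q x0 x0 (is_lim_id x0) HQ).
  assert (HQ0' : Finite (Q x0) <> Finite 0) by congruence.
  apply (is_lim_ext_loc (fun y => - ((g y - g x0) / (y - x0)) / Q y)).
  - change (locally x0 (fun y => y <> x0 ->
      - ((g y - g x0) / (y - x0)) / Q y = (b y - b x0) / (y - x0))).
    generalize (filter_and _ _ Hfact (locally_neq0_of_continuous Q x0 HQ HQ0)).
    apply filter_imp. intros y [Hy HQy] Hyx.
    replace (g y - g x0) with (- ((b y - b x0) * Q y)) by lra.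
    field. split; lra.
  - exact (is_lim_div _ _ x0 _ _ (is_lim_opp _ x0 _ (is_lim_slope _ _ _ Hg)) HQlim HQ0' I).
Qed.

Lemma chord_sym (h : R -> R) (a b : R) : chord h a b = chord h b a.
Proof.
  unfold chord, Rdiv.
  replace (2 * h b - 2 * h a) with (- (2 * h a - 2 * h b)) by ring.
  replace (b ^ 2 - a ^ 2) with (- (a ^ 2 - b ^ 2)) by ring.
  rewrite Rinv_opp. ring.
Qed.

Section SecantGap.

Variables (h P P1 P2 : R -> R) (t1 t2 : R).

Hypothesis t1_gt1 : 1 < t1.
Hypothesis P_deriv : forall t, 1 < t -> is_derive P t (P1 t).
Hypothesis P1_deriv : forall t, 1 < t -> is_derive P1 t (P2 t).
Hypothesis h_deriv : forall t, 1 < t -> is_derive h t (t * P1 t).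
Hypothesis P1_neg : forall t, 1 < t -> P1 t < 0.
Hypothesis P2_pos : forall t, 1 < t < t1 -> 0 < P2 t.
Hypothesis P2_neg : forall t, t1 < t < t2 -> P2 t < 0.
Hypothesis P_unbounded : forall K, exists a, 1 < a < t1 /\ K < P a.

Definition secant_gap (x t : R) : R := h t - h x - P1 x * (t ^ 2 - x ^ 2) / 2.

Lemma secant_gap_eq0_iff_chord (x t : R) : t ^ 2 <> x ^ 2 ->
  secant_gap x t = 0 <-> chord h t x = P1 x.
Proof.
  intros Htx. unfold secant_gap, chord.
  assert (t ^ 2 - x ^ 2 <> 0) by lra.
  split; intros E.
  - replace (2 * h t - 2 * h x) with (P1 x * (t ^ 2 - x ^ 2)) by lra. now field.
  - rewrite <- E. now field.
Qed.

Lemma P1_lt_chord_of_secant_gap_neg (x t : R) : 0 < t < x ->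
  secant_gap x t < 0 -> P1 x < chord h x t.
Proof.
  intros Htx Hgap.
  assert (Hd : 0 < x ^ 2 - t ^ 2) by nra.
  assert (E : chord h x t - P1 x = - 2 * secant_gap x t / (x ^ 2 - t ^ 2))
    by (unfold chord, secant_gap; field; lra).
  enough (0 < chord h x t - P1 x) by lra.
  rewrite E. apply Rdiv_lt_0_compat; lra.
Qed.

Lemma is_derive_secant_gap_r (x t : R) : 1 < t ->
  is_derive (secant_gap x) t (t * (P1 t - P1 x)).
Proof.
  intros Ht. unfold secant_gap. auto_derive.
  - exists (t * P1 t). now apply h_deriv.
  - replace (Derive (fun y => h y) t) with (t * P1 t)
      by (symmetry; now apply is_derive_unique, h_deriv).
    field.
Qed.

Lemma is_derive_secant_gap_l (x t : R) : 1 < x ->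
  is_derive (fun y => secant_gap y t) x (- P2 x * (t ^ 2 - x ^ 2) / 2).
Proof.
  intros Hx. unfold secant_gap. auto_derive.
  - split; [exists (x * P1 x); now apply h_deriv|].
    split; [exists (P2 x); now apply P1_deriv|easy].
  - replace (Derive (fun y => h y) x) with (x * P1 x)
      by (symmetry; now apply is_derive_unique, h_deriv).
    replace (Derive (fun y => P1 y) x) with (P2 x)
      by (symmetry; now apply is_derive_unique, P1_deriv).
    field.
Qed.

Lemma P1_lt_increasing (a b : R) : 1 < a < b -> b <= t1 -> P1 a < P1 b.
Proof.
  intros Hab Hb. apply (lt_of_is_derive_pos P1 P2); [lra| |].
  - intros c Hc. apply P1_deriv. lra.
  - intros c Hc. apply P2_pos. lra.
Qed.

Lemma P1_lt_decreasing (a b : R) : t1 <= a < b -> b < t2 -> P1 b < P1 a.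
Proof.
  intros Hab Hb. apply (lt_of_is_derive_neg P1 P2); [lra| |].
  - intros c Hc. apply P1_deriv. lra.
  - intros c Hc. apply P2_neg. lra.
Qed.

Lemma secant_gap_neg_ge_t1 (x y : R) : x < t2 -> t1 <= y < x -> secant_gap x y < 0.
Proof.
  intros Hx Hy.
  replace 0 with (secant_gap x x) by (unfold secant_gap; field).
  apply (lt_of_is_derive_pos _ (fun c => c * (P1 c - P1 x))); [lra| |].
  - intros c Hc. apply is_derive_secant_gap_r. lra.
  - intros c Hc. assert (P1 x < P1 c) by (apply P1_lt_decreasing; lra). nra.
Qed.

Lemma secant_gap_neg_of_P1_le (x y : R) : t1 < x < t2 -> 1 < y < t1 ->
  P1 x <= P1 y -> secant_gap x y < 0.
Proof.
  intros Hx Hy HP1.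
  apply (Rlt_trans _ (secant_gap x t1)); [|apply secant_gap_neg_ge_t1; lra].
  apply (lt_of_is_derive_pos _ (fun c => c * (P1 c - P1 x))); [lra| |].
  - intros c Hc. apply is_derive_secant_gap_r. lra.
  - intros c Hc. assert (P1 y < P1 c) by (apply P1_lt_increasing; lra). nra.
Qed.

Lemma secant_gap_lt_of_P1_le (x u v : R) : 1 < u < v -> v <= t1 ->
  P1 v <= P1 x -> secant_gap x v < secant_gap x u.
Proof.
  intros Huv Hv HP1.
  apply (lt_of_is_derive_neg _ (fun c => c * (P1 c - P1 x))); [lra| |].
  - intros c Hc. apply is_derive_secant_gap_r. lra.
  - intros c Hc. assert (P1 c < P1 v) by (apply P1_lt_increasing; lra). nra.
Qed.

Lemma secant_gap_pos_near_1 (x : R) : t1 < x ->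
  exists a, 1 < a < t1 /\ 0 < secant_gap x a.
Proof.
  intros Hx. destruct (P_unbounded (P x - P1 x * x ^ 2 / 2)) as [a [Ha HPa]].
  exists a. split; [exact Ha|].
  assert (Hhp : h x - P x < h a - P a).
  { apply (lt_of_is_derive_neg (fun t => h t - P t) (fun c => c * P1 c - P1 c)); [lra| |].
    - intros c Hc. apply (is_derive_minus h P); [apply h_deriv|apply P_deriv]; lra.
    - intros c Hc. assert (P1 c < 0) by (apply P1_neg; lra). nra. }
  assert (P1 x < 0) by (apply P1_neg; lra).
  unfold secant_gap. nra.
Qed.

Lemma secant_gap_root_exists (x : R) : t1 < x < t2 ->
  exists b, 1 < b < x /\ secant_gap x b = 0.
Proof.
  intros Hx. destruct (secant_gap_pos_near_1 x) as [a [Ha Hpos]]; [lra|].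
  assert (Hneg : secant_gap x t1 < 0) by (apply secant_gap_neg_ge_t1; lra).
  destruct (Ranalysis5.IVT_interv (fun t => - secant_gap x t) a t1) as [b [Hb Hroot]];
    [|lra|lra|lra|].
  - intros c Hc. apply continuity_pt_opp, continuity_pt_filterlim.
    apply (ex_derive_continuous (secant_gap x)).
    eexists. apply is_derive_secant_gap_r. lra.
  - exists b. split; lra.
Qed.

Lemma secant_gap_root_sign (x b : R) : t1 < x < t2 -> 1 < b < x -> secant_gap x b = 0 ->
  b < t1 /\ P1 b < P1 x /\
  (forall y, 1 < y < b -> 0 < secant_gap x y) /\
  (forall y, b < y < x -> secant_gap x y < 0).
Proof.
  intros Hx Hb Hroot.
  assert (Hbt1 : b < t1).
  { apply Rnot_le_lt. intros Hle.
    assert (secant_gap x b < 0) by (apply secant_gap_neg_ge_t1; lra). lra. }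
  assert (HP1 : P1 b < P1 x).
  { apply Rnot_le_lt. intros Hle.
    assert (secant_gap x b < 0) by (apply secant_gap_neg_of_P1_le; lra). lra. }
  repeat split; [exact Hbt1|exact HP1| |].
  - intros y Hy. rewrite <- Hroot. apply secant_gap_lt_of_P1_le; lra.
  - intros y Hy. destruct (Rlt_le_dec y t1) as [Hyt1|Hyt1];
      [|apply secant_gap_neg_ge_t1; lra].
    destruct (Rle_lt_dec (P1 x) (P1 y)) as [HP1y|HP1y];
      [apply secant_gap_neg_of_P1_le; lra|].
    rewrite <- Hroot. apply secant_gap_lt_of_P1_le; lra.
Qed.

Definition tau_pr (x : R) : R :=
  epsilon (inhabits 0) (fun b => 1 < b < x /\ secant_gap x b = 0).

Lemma tau_pr_spec (x : R) : t1 < x < t2 ->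
  1 < tau_pr x < x /\ secant_gap x (tau_pr x) = 0.
Proof.
  intros Hx. apply (epsilon_spec (inhabits 0) (fun b => 1 < b < x /\ secant_gap x b = 0)).
  now apply secant_gap_root_exists.
Qed.

Lemma tau_pr_sign (x : R) : t1 < x < t2 ->
  tau_pr x < t1 /\ P1 (tau_pr x) < P1 x /\
  (forall y, 1 < y < tau_pr x -> 0 < secant_gap x y) /\
  (forall y, tau_pr x < y < x -> secant_gap x y < 0).
Proof.
  intros Hx. destruct (tau_pr_spec x Hx) as [Hb Hroot].
  now apply secant_gap_root_sign.
Qed.

Lemma tau_pr_chord (x : R) : t1 < x < t2 ->
  P1 (tau_pr x) < chord h (tau_pr x) x /\ chord h (tau_pr x) x = P1 x /\
  (forall tau, tau_pr x < tau < x -> chord h x (tau_pr x) < chord h x tau).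
Proof.
  intros Hx. destruct (tau_pr_spec x Hx) as [Hb Hroot].
  destruct (tau_pr_sign x Hx) as (_ & HP1 & _ & Hright).
  apply secant_gap_eq0_iff_chord in Hroot; [|nra].
  repeat split; [lra|exact Hroot|].
  intros tau Htau. rewrite chord_sym, Hroot.
  apply P1_lt_chord_of_secant_gap_neg; [lra|now apply Hright].
Qed.

Lemma tau_pr_unique (x b : R) : t1 < x < t2 -> 1 < b < x -> chord h b x = P1 x ->
  b = tau_pr x.
Proof.
  intros Hx Hb Hchord.
  apply secant_gap_eq0_iff_chord in Hchord as Hroot; [|nra].
  destruct (tau_pr_sign x Hx) as (_ & _ & Hleft & Hright).
  destruct (Rtotal_order b (tau_pr x)) as [Hlt|[Heq|Hgt]]; [|exact Heq|].
  - specialize (Hleft b (conj (proj1 Hb) Hlt)). lra.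
  - specialize (Hright b (conj Hgt (proj2 Hb))). lra.
Qed.

Lemma continuous_tau_pr (x0 : R) : t1 < x0 < t2 -> continuous tau_pr x0.
Proof.
  intros Hx0. apply (continuous_sign_change_point secant_gap tau_pr 1 t1).
  - destruct (tau_pr_spec x0 Hx0) as [Hb _]. destruct (tau_pr_sign x0 Hx0) as [Hbt1 _]. lra.
  - intros t Ht. apply (ex_derive_continuous (fun y => secant_gap y t)).
    eexists. apply is_derive_secant_gap_l. lra.
  - apply (locally_interval _ x0 t1 t2); try easy.
    intros y Hy1 Hy2. simpl in Hy1, Hy2.
    destruct (tau_pr_sign y (conj Hy1 Hy2)) as (_ & _ & Hleft & Hright).
    split; [exact Hleft|]. intros t Ht. apply Hright. lra.
Qed.

Lemma continuous_tau_pr_slope (x0 : R) : t1 < x0 < t2 ->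
  let b0 := tau_pr x0 in
  continuous (fun y => slope_at h b0 (b0 * P1 b0) (tau_pr y) - P1 y * ((tau_pr y + b0) / 2)) x0.
Proof.
  intros Hx0 b0. destruct (tau_pr_spec x0 Hx0) as [Hb0 _]. fold b0 in Hb0.
  apply (continuous_minus (fun y => slope_at h b0 (b0 * P1 b0) (tau_pr y))
                          (fun y => P1 y * ((tau_pr y + b0) / 2))).
  - apply (continuous_comp tau_pr (slope_at h b0 (b0 * P1 b0))).
    + now apply continuous_tau_pr.
    + apply continuous_slope_at, h_deriv. lra.
  - apply (continuous_mult P1 (fun y => (tau_pr y + b0) / 2)).
    + apply (ex_derive_continuous P1). eexists. apply P1_deriv. lra.
    + apply (continuous_mult (fun y => tau_pr y + b0) (fun _ => / 2)).
      * apply (continuous_plus tau_pr (fun _ => b0)).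
        -- now apply continuous_tau_pr.
        -- apply continuous_const.
      * apply continuous_const.
Qed.

Lemma is_derive_tau_pr (x0 : R) : t1 < x0 < t2 ->
  exists d, is_derive tau_pr x0 d /\ d < 0.
Proof.
  intros Hx0. set (b0 := tau_pr x0).
  destruct (tau_pr_spec x0 Hx0) as [Hb0 Hroot0].
  destruct (tau_pr_sign x0 Hx0) as (Hb0t1 & HP1b0 & _ & _).
  fold b0 in Hb0, Hroot0, Hb0t1, HP1b0.
  (* [(tau_pr y - b0) * Q y = secant_gap y (tau_pr y) - secant_gap y b0 = - secant_gap y b0]. *)
  set (Q y := slope_at h b0 (b0 * P1 b0) (tau_pr y) - P1 y * ((tau_pr y + b0) / 2)).
  set (dg := - P2 x0 * (b0 ^ 2 - x0 ^ 2) / 2).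
  assert (HQ0 : Q x0 = b0 * (P1 b0 - P1 x0)).
  { unfold Q. fold b0. rewrite slope_at_eq. field. }
  assert (HQ0_neg : Q x0 < 0).
  { rewrite HQ0. assert (0 < b0 * (P1 x0 - P1 b0)) by (apply Rmult_lt_0_compat; lra). lra. }
  assert (Hdg_neg : dg < 0).
  { unfold dg. assert (P2 x0 < 0) by (apply P2_neg; lra).
    assert (b0 ^ 2 < x0 ^ 2) by nra. nra. }
  exists (- dg / Q x0). split.
  - apply (is_derive_of_factorization tau_pr (fun y => secant_gap y b0) Q); [| |lra|].
    + apply is_derive_secant_gap_l. lra.
    + now apply continuous_tau_pr_slope.
    + apply (locally_interval _ x0 t1 t2); try easy.
      intros y Hy1 Hy2. simpl in Hy1, Hy2.
      destruct (tau_pr_spec y (conj Hy1 Hy2)) as [_ Hroot].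
      unfold Q. rewrite Rmult_minus_distr_l, slope_at_spec.
      fold b0. rewrite Hroot0. unfold secant_gap in Hroot |- *. lra.
  - assert (/ Q x0 < 0) by (apply Rinv_lt_0_compat; lra).
    unfold Rdiv. nra.
Qed.

End SecantGap.

Definition pres_deriv (S gamma t : R) : R :=
  - S * gamma / (t - 1) / Rpower (t - 1) gamma + 2 / t ^ 3.

Lemma is_derive_pres (S gamma t : R) : 1 < t ->
  is_derive (pres S gamma) t (pres_deriv S gamma t).
Proof.
  intros Ht. unfold pres, pres_deriv, Rpower. auto_derive.
  - repeat split; try lra. apply Rgt_not_eq, exp_pos. nra.
  - replace (t + - (1)) with (t - 1) by ring.
    assert (exp (gamma * ln (t - 1)) <> 0) by apply Rgt_not_eq, exp_pos.
    field. split; lra.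
Qed.

Lemma is_derive_Derive_pres (S gamma t : R) : 1 < t ->
  is_derive (Derive (pres S gamma)) t (Derive (Derive (pres S gamma)) t).
Proof.
  intros Ht. apply Derive_correct.
  apply (ex_derive_ext_loc (pres_deriv S gamma)).
  - apply (locally_interval _ t 1 p_infty); try easy.
    intros y Hy _. symmetry. now apply is_derive_unique, is_derive_pres.
  - unfold pres_deriv, Rpower. auto_derive. repeat split; try lra.
    + apply Rgt_not_eq, exp_pos.
    + assert (0 < t * (t * (t * 1))) by (apply Rmult_lt_0_compat; [lra|nra]). lra.
Qed.

Lemma pres_gt_near_1 (S gamma t : R) : 0 < S -> 1 < gamma -> 1 < t < 2 ->
  S / (t - 1) - 1 < pres S gamma t.
Proof.
  intros HS Hgamma Ht. unfold pres, Rpower.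
  assert (Hln : ln (t - 1) < 0) by (rewrite <- ln_1; apply ln_increasing; lra).
  assert (Hpow : exp (gamma * ln (t - 1)) < t - 1).
  { rewrite <- (exp_ln (t - 1)) at 2 by lra. apply exp_increasing. nra. }
  assert (Hpow_pos := exp_pos (gamma * ln (t - 1))).
  assert (S / (t - 1) < S / exp (gamma * ln (t - 1))).
  { apply Rmult_lt_compat_l; [lra|]. apply Rinv_lt_contravar; nra. }
  assert (1 / t ^ 2 < 1).
  { apply (Rmult_lt_reg_r (t ^ 2)); [nra|]. field_simplify; nra. }
  lra.
Qed.

Lemma pres_unbounded_near_1 (S gamma t1 : R) : 0 < S -> 1 < gamma -> 1 < t1 ->
  forall K, exists a, 1 < a < t1 /\ K < pres S gamma a.
Proof.
  intros HS Hgamma Ht1 K.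
  assert (HK : 0 < Rabs K + 1) by (pose proof (Rabs_pos K); lra).
  destruct (exists_pos_lt3 1 (t1 - 1) (S / (Rabs K + 1))) as (d & Hd & Hd1 & Hdt1 & HdK);
    [lra|lra|now apply Rdiv_lt_0_compat|].
  exists (1 + d). split; [lra|].
  assert (Hpres := pres_gt_near_1 S gamma (1 + d) HS Hgamma ltac:(lra)).
  replace (1 + d - 1) with d in Hpres by ring.
  assert (d * (Rabs K + 1) < S).
  { replace S with (S / (Rabs K + 1) * (Rabs K + 1)) by (field; lra).
    now apply Rmult_lt_compat_r. }
  assert (Rabs K + 1 < S / d).
  { apply (Rmult_lt_reg_r d); [lra|]. replace (S / d * d) with S by (field; lra). lra. }
  pose proof (Rle_abs K). lra.
Qed.

Theorem proposition3p5 :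
  forall (S gamma tau1 tau2 : R) (h : R -> R),
    1 < gamma < 2 -> 0 < S -> 1 < tau1 < tau2 ->
    (forall tau, 1 < tau -> Derive (pres S gamma) tau < 0) ->
    (forall tau, (1 < tau < tau1 \/ tau2 < tau) ->
        0 < Derive (Derive (pres S gamma)) tau) ->
    (forall tau, tau1 < tau < tau2 ->
        Derive (Derive (pres S gamma)) tau < 0) ->
    (forall tau, 1 < tau -> is_derive h tau (tau * Derive (pres S gamma) tau)) ->
    exists tpr : R -> R,
      (forall tf, tau1 < tf < tau2 ->
         1 < tpr tf < tf /\ tpr_prop S gamma h tf (tpr tf) /\
         (forall tb, 1 < tb < tf -> tpr_prop S gamma h tf tb -> tb = tpr tf)) /\
      (forall tf, tau1 < tf < tau2 ->
         exists d, is_derive tpr tf d /\ d < 0).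
Proof.
  intros S gamma tau1 tau2 h [Hgamma _] HS [Htau1 _] HP1_neg HP2_pos HP2_neg Hh.
  assert (HP : forall t, 1 < t -> is_derive (pres S gamma) t (Derive (pres S gamma) t)).
  { intros t Ht. apply Derive_correct. eexists. now apply is_derive_pres. }
  assert (HP1 := is_derive_Derive_pres S gamma).
  assert (HP2_pos' : forall t, 1 < t < tau1 -> 0 < Derive (Derive (pres S gamma)) t)
    by (intros t Ht; apply HP2_pos; now left).
  assert (Hunbounded := pres_unbounded_near_1 S gamma tau1 HS Hgamma Htau1).
  exists (tau_pr h (Derive (pres S gamma))). split; intros tf Htf.
  - split; [|split].
    + eapply proj1, tau_pr_spec; eauto.
    + eapply tau_pr_chord; eauto.
    + intros tb Htb [_ [Hchord _]]. eapply tau_pr_unique; eauto.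
  - eapply is_derive_tau_pr; eauto.
Qed.
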